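(* Let $\alpha,\beta>-1$, $n\ge1$, and let $d_{k,n}$, $0\le k\le n$, be as defined below. Then for every integer $k\ge0$ with $k+2\le n$, $$d_{k,n}=\frac{2(\alpha-\beta)(k+1)}{n(n+\alpha+\beta+1)-k^2-(\alpha+\beta+1)k}\,d_{k+1,n}+\frac{n(n+\alpha+\beta+1)-(k+2)^2+(\alpha+\beta+1)(k+2)}{n(n+\alpha+\beta+1)-k^2-(\alpha+\beta+1)k}\,d_{k+2,n},$$ and $$d_{n,n}=\frac{\Gamma(2n+\alpha+\beta+1)}{2^{2n}\Gamma(n+\alpha+\beta+1)\Gamma(n+1)},\qquad d_{n-1,n}=\frac{(\alpha-\beta)\Gamma(2n+\alpha+\beta)}{2^{2n-1}\Gamma(n+\alpha+\beta+1)\Gamma(n)}.$$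
   Context: For $\alpha,\beta>-1$ and $0\le k\le n$, $d_{k,n}=\frac{(n+\alpha+\beta+1)_k(k+\alpha+1)_{n-k}}{(n-k)!\,2^{2k}\Gamma(k+1)}\,{}_3F_2\!\left[\begin{matrix}k-n,\ n+k+\alpha+\beta+1,\ k+\frac12\\ k+\alpha+1,\ 2k+1\end{matrix};1\right]$, with $(a)_k$ the Pochhammer symbol and ${}_3F_2$ the generalized hypergeometric series. Equivalently, these are the coefficients in the Chebyshev expansion $P_n^{(\alpha,\beta)}(x)=d_{0,n}+2\sum_{k=1}^n d_{k,n}T_k(x)$, where $P_n^{(\alpha,\beta)}$ is the Jacobi polynomial and $T_k(\cos\theta)=\cos k\theta$. *)

From Stdlib Require Import Reals Arith Factorial.
Open Scope R_scope.

Fixpoint poch (a : R) (k : nat) : R :=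
  match k with
  | O => 1
  | S k' => poch a k' * (a + INR k')
  end.

(* The 3F2 at 1 with upper parameter k-n (k <= n) terminates: all terms with
   index j > n-k vanish, so it is the finite sum over j = 0 .. n-k. *)
Definition hyp3F2_term (k n : nat) (al be : R) : R :=
  sum_f_R0 (fun j =>
      poch (INR k - INR n) j * poch (INR n + INR k + al + be + 1) j
      * poch (INR k + / 2) j
      / (poch (INR k + al + 1) j * poch (2 * INR k + 1) j * INR (fact j)))
    (n - k).

(* d_{k,n}; Gamma(k+1) = k!. *)
Definition dcoef (al be : R) (k n : nat) : R :=
  poch (INR n + al + be + 1) k * poch (INR k + al + 1) (n - k)
  / (INR (fact (n - k)) * 2 ^ (2 * k) * INR (fact k))
  * hyp3F2_term k n al be.

(* Expanding the terminating 3F2 gives d_{k,n} = sum_{j <= n-k} T_k(j) with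
   T_k(j) = (-1)^j w(k+j) / ((2k+j)! j!), where the weight w depends only on k + j.
   The combination D T_k(j+2) - c1 T_{k+1}(j+1) - c2 T_{k+2}(j), with D, c1, c2 the
   coefficients of the recurrence, is then a telescoping difference H_k(j+2) - H_k(j+1)
   (a Zeilberger-style certificate), and H_k(n-k) = 0 because H_k(j) carries the
   factor n - k - j.  The two closed forms are the one- and two-term cases of the sum. *)
From Stdlib Require Import Reals Arith Factorial Lra Lia.
Open Scope R_scope.

Lemma poch_add x p q : poch x (p + q) = poch x p * poch (x + INR p) q.
Proof.
  induction q as [|q IH].
  - rewrite Nat.add_0_r; simpl; ring.
  - rewrite Nat.add_succ_r; simpl poch; rewrite IH, plus_INR; ring.
Qed.

Lemma poch_S_l x q : poch x (S q) = x * poch (x + 1) q.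
Proof.
  change (S q) with (1 + q)%nat; rewrite poch_add; simpl; ring_simplify.
  replace (x + 1) with (x + INR 1) by (simpl; ring); ring.
Qed.

Lemma poch_pos x j : 0 < x -> 0 < poch x j.
Proof.
  intros Hx; induction j as [|j IH]; simpl; [lra|].
  apply Rmult_lt_0_compat; [exact IH|]; pose proof (pos_INR j); lra.
Qed.

Lemma poch_opp_INR m j : (j <= m)%nat ->
  poch (- INR m) j * INR (fact (m - j)) = (-1) ^ j * INR (fact m).
Proof.
  induction j as [|j IH]; intros Hj.
  - rewrite Nat.sub_0_r; simpl; ring.
  - replace (m - j)%nat with (S (m - S j)) in IH by lia.
    rewrite fact_simpl, mult_INR, S_INR, minus_INR in IH by lia.
    simpl poch; simpl pow.
    transitivity (- (poch (- INR m) j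
                     * ((INR m - INR (S j) + 1) * INR (fact (m - S j)))));
      [rewrite S_INR; ring|].
    rewrite IH by lia; ring.
Qed.

Lemma poch_INR_S_fact p j : poch (INR p + 1) j * INR (fact p) = INR (fact (p + j)).
Proof.
  induction j as [|j IH].
  - rewrite Nat.add_0_r; simpl; ring.
  - rewrite Nat.add_succ_r, fact_simpl, mult_INR, <- IH, S_INR, plus_INR.
    simpl poch; ring.
Qed.

Lemma fact_double k : INR (fact (2 * k)) = 2 ^ (2 * k) * INR (fact k) * poch (/ 2) k.
Proof.
  induction k as [|k IH].
  - simpl; ring.
  - replace (2 * S k)%nat with (S (S (2 * k))) by lia.
    rewrite !fact_simpl, !mult_INR, IH, !S_INR, mult_INR.
    simpl pow; simpl poch; simpl INR; field.
Qed.

Section ChebyshevCoefficients.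
Variables (al be : R) (n : nat).
Hypothesis al_gt_m1 : -1 < al.

Definition dweight (s : nat) : R :=
  poch (INR n + al + be + 1) s * poch (INR s + al + 1) (n - s) * poch (/ 2) s
  / INR (fact (n - s)).

Definition dsummand (k j : nat) : R :=
  (-1) ^ j * dweight (k + j) / (INR (fact (2 * k + j)) * INR (fact j)).

Lemma dcoef_sum k : (k <= n)%nat -> dcoef al be k n = sum_f_R0 (dsummand k) (n - k).
Proof.
  intros Hkn; unfold dcoef, hyp3F2_term.
  rewrite scal_sum; apply sum_eq; intros j Hj.
  set (m := (n - k)%nat) in *.
  assert (Hn : n = (k + m)%nat) by lia; clearbody m.
  unfold dsummand, dweight.
  replace (n - (k + j))%nat with (m - j)%nat by lia.
  rewrite (poch_add (INR n + al + be + 1) k j).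
  replace (INR n + INR k + al + be + 1) with (INR n + al + be + 1 + INR k) by ring.
  replace m with (j + (m - j))%nat at 1 by lia.
  rewrite (poch_add (INR k + al + 1) j (m - j)).
  replace (INR (k + j) + al + 1) with (INR k + al + 1 + INR j) by (rewrite plus_INR; ring).
  rewrite (poch_add (/ 2) k j).
  replace (INR k + / 2) with (/ 2 + INR k) by ring.
  assert (upper : poch (INR k - INR n) j = (-1) ^ j * INR (fact m) / INR (fact (m - j))).
  { replace (INR k - INR n) with (- INR m) by (rewrite Hn, plus_INR; ring).
    apply (Rmult_eq_reg_r (INR (fact (m - j)))); [|apply INR_fact_neq_0].
    rewrite poch_opp_INR by lia; field; apply INR_fact_neq_0. }
  assert (lower : poch (2 * INR k + 1) j = INR (fact (2 * k + j)) / INR (fact (2 * k))).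
  { rewrite <- (poch_INR_S_fact (2 * k) j).
    replace (INR (2 * k)) with (2 * INR k) by (rewrite mult_INR; simpl; ring).
    field; apply INR_fact_neq_0. }
  rewrite upper, lower, fact_double.
  assert (0 < poch (INR k + al + 1) j) by (apply poch_pos; pose proof (pos_INR k); lra).
  assert (0 < poch (/ 2) k) by (apply poch_pos; lra).
  assert (0 < 2 ^ (2 * k)) by (apply pow_lt; lra).
  pose proof (INR_fact_neq_0 (2 * k + j)); pose proof (INR_fact_neq_0 (m - j)).
  pose proof (INR_fact_neq_0 m); pose proof (INR_fact_neq_0 j);
  pose proof (INR_fact_neq_0 k).
  field; repeat split; lra.
Qed.

Lemma dweight_S s : (s < n)%nat ->
  dweight (S s) = (INR s + (INR n + al + be + 1)) * (INR s + / 2) * (INR n - INR s)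
                  * dweight s / (INR s + al + 1).
Proof.
  intros Hs; unfold dweight.
  replace (n - s)%nat with (S (n - S s)) by lia.
  rewrite (poch_S_l (INR s + al + 1)), fact_simpl, mult_INR; cbn [poch].
  replace (INR (S s) + al + 1) with (INR s + al + 1 + 1) by (rewrite S_INR; ring).
  rewrite S_INR, minus_INR, S_INR by lia.
  apply lt_INR in Hs.
  pose proof (INR_fact_neq_0 (n - S s)); pose proof (pos_INR s).
  field; repeat split; lra.
Qed.

Definition certificate (k j : nat) : R :=
  4 * (INR k + 1) * (-1) ^ j * (INR n - INR (k + j)) * (INR (k + j) + (INR n + al + be + 1))
  * (INR (k + j) + / 2) * dweight (k + j) / (INR (fact (2 * k + j + 2)) * INR (fact j)).

Lemma certificate_dweight_S k j : (k + j < n)%nat ->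
  certificate k j = 4 * (INR k + 1) * (-1) ^ j * (INR (k + j) + al + 1)
                    * dweight (S (k + j)) / (INR (fact (2 * k + j + 2)) * INR (fact j)).
Proof.
  intros Hkj; unfold certificate; rewrite dweight_S by exact Hkj.
  pose proof (INR_fact_neq_0 (2 * k + j + 2)); pose proof (INR_fact_neq_0 j).
  pose proof (pos_INR (k + j)).
  field; repeat split; lra.
Qed.

Variable k : nat.

Let D := INR n * (INR n + al + be + 1) - INR k ^ 2 - (al + be + 1) * INR k.
Let c1 := 2 * (al - be) * (INR k + 1).
Let c2 := INR n * (INR n + al + be + 1) - (INR k + 2) ^ 2 + (al + be + 1) * (INR k + 2).

Lemma dsummand_telescope_0 : (k < n)%nat -> D * dsummand k 0 = certificate k 0.
Proof.
  intros Hk; unfold dsummand, certificate, D.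
  rewrite !Nat.add_0_r.
  replace (2 * k + 2)%nat with (S (S (2 * k))) by lia.
  rewrite !fact_simpl.
  pose proof (INR_fact_neq_0 (2 * k)); pose proof (pos_INR k).
  set (X := fact (2 * k)) in *; set (w := dweight k); clearbody X w.
  rewrite !mult_INR, !S_INR, !mult_INR; simpl INR; cbn [pow].
  field; repeat split; lra.
Qed.

Lemma dsummand_telescope_1 : (k + 1 < n)%nat ->
  D * dsummand k 1 - c1 * dsummand (k + 1) 0 = certificate k 1 - certificate k 0.
Proof.
  intros Hk; rewrite (certificate_dweight_S k 0) by lia.
  unfold dsummand, certificate, D, c1.
  replace (S (k + 0)) with (S k) by lia.
  replace (k + 1 + 0)%nat with (S k) by lia.
  replace (k + 1)%nat with (S k) by lia.
  replace (2 * S k + 0)%nat with (S (S (2 * k))) by lia.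
  replace (2 * k + 1 + 2)%nat with (S (S (S (2 * k)))) by lia.
  replace (2 * k + 0 + 2)%nat with (S (S (2 * k))) by lia.
  replace (2 * k + 1)%nat with (S (2 * k)) by lia.
  rewrite !fact_simpl.
  pose proof (INR_fact_neq_0 (2 * k)); pose proof (pos_INR k).
  set (X := fact (2 * k)) in *; set (w := dweight (S k)); clearbody X w.
  rewrite !mult_INR, !S_INR, !plus_INR, !mult_INR; simpl INR; cbn [pow].
  field; repeat split; lra.
Qed.

Lemma dsummand_telescope i : (k + S (S i) <= n)%nat ->
  D * dsummand k (S (S i)) - c1 * dsummand (k + 1) (S i) - c2 * dsummand (k + 2) i
  = certificate k (S (S i)) - certificate k (S i).
Proof.
  intros Hi; rewrite (certificate_dweight_S k (S i)) by lia.
  unfold dsummand, certificate, D, c1, c2.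
  replace (k + S (S i))%nat with (S (k + S i)) by lia.
  replace (k + 1 + S i)%nat with (S (k + S i)) by lia.
  replace (k + 2 + i)%nat with (S (k + S i)) by lia.
  replace (2 * (k + 1) + S i)%nat with (S (2 * k + S (S i))) by lia.
  replace (2 * (k + 2) + i)%nat with (S (S (2 * k + S (S i)))) by lia.
  replace (2 * k + S (S i) + 2)%nat with (S (S (2 * k + S (S i)))) by lia.
  replace (2 * k + S i + 2)%nat with (S (2 * k + S (S i))) by lia.
  rewrite !(fact_simpl (S (2 * k + S (S i)))), !(fact_simpl (2 * k + S (S i))).
  rewrite !(fact_simpl (S i)), !(fact_simpl i).
  pose proof (INR_fact_neq_0 (2 * k + S (S i))); pose proof (INR_fact_neq_0 i).
  pose proof (pos_INR k); pose proof (pos_INR i).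
  set (X := fact (2 * k + S (S i))) in *; set (Y := fact i) in *;
  set (w := dweight (S (k + S i))); clearbody X Y w.
  cbn [pow]; rewrite !mult_INR, !S_INR, !plus_INR, !mult_INR, !S_INR; simpl INR.
  field; repeat split; lra.
Qed.

Lemma dsummand_partial_sums q : (k + S (S q) <= n)%nat ->
  D * sum_f_R0 (dsummand k) (S (S q)) - c1 * sum_f_R0 (dsummand (k + 1)) (S q)
  - c2 * sum_f_R0 (dsummand (k + 2)) q = certificate k (S (S q)).
Proof.
  induction q as [|q IH]; intros Hkq.
  - cbn [sum_f_R0].
    pose proof (dsummand_telescope_0 ltac:(lia)).
    pose proof (dsummand_telescope_1 ltac:(lia)).
    pose proof (dsummand_telescope 0 Hkq).
    lra.
  - rewrite (tech5 (dsummand k)), (tech5 (dsummand (k + 1))), (tech5 (dsummand (k + 2))).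
    pose proof (IH ltac:(lia)); pose proof (dsummand_telescope (S q) Hkq).
    lra.
Qed.

Lemma dcoef_rec_combination : (k + 2 <= n)%nat ->
  D * dcoef al be k n - c1 * dcoef al be (k + 1) n - c2 * dcoef al be (k + 2) n = 0.
Proof.
  intros Hk; rewrite !dcoef_sum by lia.
  replace (n - k)%nat with (S (S (n - k - 2))) by lia.
  replace (n - (k + 1))%nat with (S (n - k - 2)) by lia.
  replace (n - (k + 2))%nat with (n - k - 2)%nat by lia.
  rewrite dsummand_partial_sums by lia.
  unfold certificate.
  replace (k + S (S (n - k - 2)))%nat with n by lia.
  unfold Rdiv; ring.
Qed.

End ChebyshevCoefficients.

Lemma dcoef_rec (al be : R) (n k : nat) : -1 < al -> -1 < be -> (k + 2 <= n)%nat ->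
  let D := INR n * (INR n + al + be + 1) - INR k ^ 2 - (al + be + 1) * INR k in
  dcoef al be k n =
    2 * (al - be) * (INR k + 1) / D * dcoef al be (k + 1) n
    + (INR n * (INR n + al + be + 1) - (INR k + 2) ^ 2 + (al + be + 1) * (INR k + 2)) / D
      * dcoef al be (k + 2) n.
Proof.
  intros Hal Hbe Hk D.
  pose proof (dcoef_rec_combination al be n Hal k Hk) as Hcomb; fold D in Hcomb.
  assert (HD : 0 < D).
  { apply le_INR in Hk; rewrite plus_INR in Hk; simpl INR in Hk.
    pose proof (pos_INR k).
    replace D with ((INR n - INR k) * (INR n + INR k + al + be + 1)) by (unfold D; ring).
    apply Rmult_lt_0_compat; lra. }
  apply (Rmult_eq_reg_l D); [|lra].
  field_simplify; lra.
Qed.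

Lemma dcoef_diag (al be : R) (n : nat) :
  dcoef al be n n = poch (INR n + al + be + 1) n / (2 ^ (2 * n) * INR (fact n)).
Proof.
  unfold dcoef, hyp3F2_term; rewrite Nat.sub_diag; cbn [sum_f_R0 poch fact]; simpl INR.
  assert (0 < 2 ^ (2 * n)) by (apply pow_lt; lra).
  pose proof (INR_fact_neq_0 n).
  field; lra.
Qed.

Lemma dcoef_subdiag (al be : R) (n : nat) : -1 < al -> (1 <= n)%nat ->
  dcoef al be (n - 1) n =
    (al - be) * poch (INR n + al + be + 1) (n - 1) / (2 ^ (2 * n - 1) * INR (fact (n - 1))).
Proof.
  intros Hal Hn; destruct n as [|m]; [lia|].
  replace (S m - 1)%nat with m by lia.
  replace (2 * S m - 1)%nat with (S (2 * m)) by lia.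
  unfold dcoef, hyp3F2_term; replace (S m - m)%nat with 1%nat by lia.
  cbn [sum_f_R0 poch fact pow]; rewrite !S_INR; simpl INR.
  assert (0 < 2 ^ (2 * m)) by (apply pow_lt; lra).
  pose proof (INR_fact_neq_0 m); pose proof (pos_INR m).
  field; repeat split; lra.
Qed.

Theorem mainTheorem2 (al be : R) (n : nat) :
  -1 < al -> -1 < be -> (1 <= n)%nat ->
  (forall k : nat, (k + 2 <= n)%nat ->
     let D := INR n * (INR n + al + be + 1) - INR k ^ 2 - (al + be + 1) * INR k in
     dcoef al be k n =
       2 * (al - be) * (INR k + 1) / D * dcoef al be (k + 1) n
       + (INR n * (INR n + al + be + 1) - (INR k + 2) ^ 2
          + (al + be + 1) * (INR k + 2)) / D * dcoef al be (k + 2) n)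
  /\ dcoef al be n n =
       poch (INR n + al + be + 1) n / (2 ^ (2 * n) * INR (fact n))
  /\ dcoef al be (n - 1) n =
       (al - be) * poch (INR n + al + be + 1) (n - 1)
       / (2 ^ (2 * n - 1) * INR (fact (n - 1))).
Proof.
  intros Hal Hbe Hn.
  split; [|split].
  - intros k Hk; exact (dcoef_rec al be n k Hal Hbe Hk).
  - apply dcoef_diag.
  - exact (dcoef_subdiag al be n Hal Hn).
Qed.
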